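(* Let $(X,\mathcal{T})$ be an anti-topological space and let $A,B\subseteq X$ be anti-dense. Then $A\cup B$ is anti-dense.
   Context: Let $X$ be a non-empty set. A family $\mathcal{T}\subseteq P(X)$ is an anti-topology on $X$ (and $(X,\mathcal{T})$ is an anti-topological space) if: (i) $\emptyset\notin\mathcal{T}$ and $X\notin\mathcal{T}$; (ii) for every $n\in\mathbb{N}$ and all $A_1,\dots,A_n\in\mathcal{T}$ that are not all equal, $\bigcap_{i=1}^n A_i\notin\mathcal{T}$; (iii) for every non-empty index set $J$ and all sets $A_i\in\mathcal{T}$ ($i\in J$) that are not all equal, $\bigcup_{i\in J}A_i\notin\mathcal{T}$. Elements of $\mathcal{T}$ are called anti-open; a set is anti-closed if its complement is anti-open, and $\mathcal{T}_{Cl}$ denotes the family of all anti-closed sets. The anti-closure of $A\subseteq X$ is $aCl(A)=\bigcap\{F: A\subseteq F,\ F\in\mathcal{T}_{Cl}\}$ (the intersection of the empty family being $X$). $A$ is anti-dense if $aCl(A)=X$. *)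

From mathcomp Require Import all_boot.
From mathcomp Require Import boolp classical_sets.
Set Implicit Arguments. Unset Strict Implicit. Unset Printing Implicit Defensive.
Local Open Scope classical_set_scope.

Definition anti_topology (X : Type) (T : set (set X)) : Prop :=
  [/\ ~ T set0, ~ T setT,
      (forall (n : nat) (A : 'I_n -> set X),
          (forall i, T (A i)) -> (exists i j, A i <> A j) ->
          ~ T (\bigcap_(i in [set: 'I_n]) A i))
    &
      (forall (J : Type) (A : J -> set X),
          inhabited J -> (forall i, T (A i)) -> (exists i j, A i <> A j) ->
          ~ T (\bigcup_(i in [set: J]) A i))].

Definition anti_closed (X : Type) (T : set (set X)) (F : set X) : Prop :=
  T (~` F).

(* anti-closure: intersection of all anti-closed supersets (empty family gives setT) *)
Definition aCl (X : Type) (T : set (set X)) (A : set X) : set X :=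
  \bigcap_(F in [set F | anti_closed T F /\ A `<=` F]) F.

Definition anti_dense (X : Type) (T : set (set X)) (A : set X) : Prop :=
  aCl T A = setT.

From mathcomp Require Import all_boot.
From mathcomp Require Import boolp classical_sets.
Local Open Scope classical_set_scope.

(* Anti-closure is monotone, so anti-density passes to supersets; A `|` B
   contains the anti-dense set A. *)

Lemma subset_aCl (X : Type) (T : set (set X)) (A B : set X) :
  A `<=` B -> aCl T A `<=` aCl T B.
Proof.
move=> AB x aClAx F [cF BF].
by apply: aClAx; split=> // y /AB /BF.
Qed.

Lemma anti_dense_superset (X : Type) (T : set (set X)) (A B : set X) :
  A `<=` B -> anti_dense T A -> anti_dense T B.
Proof.
rewrite /anti_dense => AB dA.
by apply/seteqP; split=> // x _; apply: subset_aCl AB _ _; rewrite dA.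
Qed.

Theorem mainTheorem20 (X : Type) (T : set (set X)) :
  inhabited X -> anti_topology T ->
  forall A B : set X, anti_dense T A -> anti_dense T B -> anti_dense T (A `|` B).
Proof.
move=> _ _ A B dA _.
exact: anti_dense_superset (@subsetUl _ A B) dA.
Qed.
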